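(* Let $V$ be an $n$-dimensional vector space over a field $\mathbb{F}$, and let $k\leq n/2$. If $K$ and $L$ are nonzero subspaces of $\bigwedge^{k}V$ such that $x\wedge y=0$ for every $x\in K$ and $y\in L$, then \[ \dim K+\dim L\leq\binom{n}{k}-\binom{n-k}{k}+1. \]
   Context: $\bigwedge V$ denotes the exterior algebra of $V$ and $\bigwedge^{k}V$ its degree-$k$ component. Subspaces $K,L$ with $K\wedge L=0$ are called cross-annihilating. The paper assumes throughout, for expository purposes, that the characteristic of $\mathbb{F}$ is not $2$. *)

From HB Require Import structures.
From mathcomp Require Import all_boot all_order all_algebra.
Set Implicit Arguments. Unset Strict Implicit. Unset Printing Implicit Defensive.
Import Order.TTheory GRing.Theory Num.Theory.
Local Open Scope ring_scope.

(* Exterior algebra of V = F^n, with basis e_A indexed by subsets A of 'I_n;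
   e_A stands for e_{a_1} /\ ... /\ e_{a_m} with a_1 < ... < a_m. *)
Definition ext (F : fieldType) (n : nat) := {ffun {set 'I_n} -> F^o}.

Definition ext_basis (F : fieldType) (n : nat) (A : {set 'I_n}) : ext F n :=
  [ffun C => (C == A)%:R].

(* sign of e_A /\ e_B = sign A B * e_(A :|: B) for disjoint A B:
   (-1)^(number of pairs (a,b), a in A, b in B, b < a) *)
Definition wsign (F : fieldType) (n : nat) (A B : {set 'I_n}) : F :=
  (-1) ^+ #|[set p : 'I_n * 'I_n | [&& p.1 \in A, p.2 \in B & (p.2 < p.1)%N]]|.

Definition wedge (F : fieldType) (n : nat) (x y : ext F n) : ext F n :=
  [ffun C => \sum_(A : {set 'I_n}) \sum_(B : {set 'I_n})
     if [disjoint A & B] && (A :|: B == C)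
     then wsign F A B * (x A : F) * (y B : F) else 0].

Definition ext_deg (F : fieldType) (n k : nat) : {vspace ext F n} :=
  <<[seq ext_basis F A | A <- enum [set A : {set 'I_n} | #|A| == k]]>>%VS.

From HB Require Import structures.
From mathcomp Require Import all_boot all_order all_algebra zify boolp.
Set Implicit Arguments. Unset Strict Implicit. Unset Printing Implicit Defensive.
Import GRing.Theory.

(* Order the subsets of 'I_n by the binary weight \sum_(i in A) 2 ^ i, which is
   injective and additive on disjoint unions.  If the heaviest supports a of x
   and b of y are disjoint, the coefficient of x /\ y at a :|: b is then a
   single nonzero term.  Hence the heaviest supports of the vectors of K and of
   L form two nonempty cross-intersecting families of k-sets, with at least
   dim K and dim L members.  For such families the Hilton-Milner bound holds:
   (i, j)-shifts keep their sizes and cross-intersection and lower their total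
   weight, so both may be assumed shifted; one then inducts on the ground set
   {0, ..., m - 1}, splitting each family at its last point t, and shiftedness
   is what keeps the links at t cross-intersecting. *)

Lemma meetP (T : finType) (A B : {set T}) :
  reflect (exists2 x, x \in A & x \in B) (~~ [disjoint A & B]).
Proof.
rewrite -setI_eq0; apply: (iffP (set0Pn _)) => [[x]|[x xA xB]].
  by rewrite inE => /andP[]; exists x.
by exists x; rewrite inE xA xB.
Qed.

Section CrossIntersecting.
Variable N : nat.
Local Notation T := 'I_N.
Implicit Types (m k : nat) (i j t : T) (A B C S : {set T}) (F H : {set {set T}}).

Definition iseg m : {set T} := [set i : T | i < m].
Definition ksub m k : {set {set T}} := [set A : {set T} | A \subset iseg m & #|A| == k].

Definition cross_intersecting F H :=
  forall A B, A \in F -> B \in H -> ~~ [disjoint A & B].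

Definition shifted F := [forall A, forall i, forall j,
  [&& A \in F, j \in A, i \notin A & i < j] ==> (i |: (A :\ j) \in F)].

Lemma shiftedP F :
  reflect (forall A i j, A \in F -> j \in A -> i \notin A -> i < j ->
             i |: (A :\ j) \in F)
          (shifted F).
Proof.
apply: (iffP forallP) => [shF A i j AF jA iA ij|shF A].
  by move: (shF A) => /forallP/(_ i)/forallP/(_ j); rewrite AF jA iA ij.
apply/forallP=> i; apply/forallP=> j; apply/implyP=> /and4P[AF jA iA ij].
exact: shF.
Qed.

Lemma cross_intersectingC F H :
  cross_intersecting F H -> cross_intersecting H F.
Proof. by move=> cFH A B AH BF; rewrite disjoint_sym cFH. Qed.

Lemma card_iseg m : m <= N -> #|iseg m| = m.
Proof.
move=> mN; have -> : iseg m = [set widen_ord mN i | i : 'I_m].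
  apply/setP=> x; rewrite inE; apply/idP/imsetP => [xm|[i _ ->]].
    by exists (Ordinal xm) => //; apply: val_inj.
  by rewrite /= ltn_ord.
by rewrite card_imset ?card_ord // => i j /(congr1 val) /= /val_inj.
Qed.

Lemma iseg_N : iseg N = setT.
Proof. by apply/setP=> i; rewrite !inE ltn_ord. Qed.

Lemma ksub_lt m k A x : A \in ksub m k -> x \in A -> x < m.
Proof. by rewrite inE => /andP[/subsetP Am _] /Am; rewrite inE. Qed.

Lemma card_ksub_mem m k A : A \in ksub m k -> #|A| = k.
Proof. by rewrite inE => /andP[_ /eqP]. Qed.

Lemma card_ksub m k : m <= N -> #|ksub m k| = 'C(m, k).
Proof. by move=> mN; rewrite cards_draws card_iseg. Qed.

Lemma card_ksub_meet m k B : m <= N -> B \subset iseg m ->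
  #|[set A in ksub m k | ~~ [disjoint A & B]]| = 'C(m, k) - 'C(m - #|B|, k).
Proof.
move=> mN Bm; have avoid_B : ksub m k :&: [set A : {set T} | [disjoint A & B]]
    = [set A : {set T} | A \subset iseg m :\: B & #|A| == k].
  by apply/setP=> A; rewrite !inE subsetD andbAC.
have := cardsID [set A : {set T} | [disjoint A & B]] (ksub m k).
rewrite avoid_B cards_draws cardsDS // card_iseg // card_ksub // => <-.
by rewrite addKn; apply: eq_card => A; rewrite !inE andbC.
Qed.

Lemma exists_notin_iseg m S : m <= N -> #|S| < m ->
  exists2 i : T, i < m & i \notin S.
Proof.
move=> mN Sm; have : ~~ (iseg m \subset S).
  by apply: contraTN Sm => /subset_leq_card; rewrite card_iseg // leqNgt.
by case/subsetPn=> i; rewrite inE; exists i.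
Qed.

Lemma cross_ksub0 m F H : F \subset ksub m 0 -> cross_intersecting F H ->
  F != set0 -> H = set0.
Proof.
move=> /subsetP Fm cFH /set0Pn[A AF]; apply/setP=> B; rewrite inE.
apply/negbTE/negP=> BH; have := cFH A B AF BH.
have := Fm A AF; rewrite inE => /andP[_ /eqP/cards0_eq ->].
by case/meetP=> x; rewrite inE.
Qed.

Lemma cross_bound_half k F H : k.*2 <= N ->
  F \subset ksub k.*2 k -> H \subset ksub k.*2 k -> cross_intersecting F H ->
  #|F| + #|H| <= 'C(k.*2, k).
Proof.
move=> kN /subsetP Fk Hk cFH; pose compl A := iseg k.*2 :\: A.
(* Complementation maps F injectively into the k-sets not in H. *)
have Fsub A : A \in F -> A \subset iseg k.*2 /\ #|A| = k.
  by move/Fk; rewrite inE => /andP[-> /eqP].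
have complK A : A \in F -> compl (compl A) = A.
  by case/Fsub=> Ak _; rewrite /compl setDDr setDv set0U (setIidPr Ak).
have compl_inj : {in F &, injective compl}.
  by move=> A B AF BF eqAB; rewrite -(complK A) // eqAB complK.
have compl_disj : [disjoint compl @: F & H].
  rewrite -setI_eq0; apply/eqP/setP=> C; rewrite !inE.
  apply/negP=> /andP[/imsetP[A AF ->] CH]; case/meetP: (cFH A _ AF CH) => x xA.
  by rewrite inE xA.
have compl_k : compl @: F :|: H \subset ksub k.*2 k.
  rewrite subUset Hk andbT; apply/subsetP=> _ /imsetP[A /Fsub[Ak cardA] ->].
  by rewrite inE subsetDl cardsDS // card_iseg // cardA -addnn addnK /=.
have := subset_leq_card compl_k.
by rewrite cardsU (disjoint_setI0 compl_disj) cards0 subn0 card_in_imset // card_ksub.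
Qed.

Definition wt A := \sum_(x in A) val x.
Definition fam_wt F := \sum_(A in F) wt A.

Section Shift.
Variables i j : T.
Hypothesis lt_ij : i < j.

Definition shift_set A := i |: (A :\ j).

Definition shift_elt F A :=
  if [&& j \in A, i \notin A & shift_set A \notin F] then shift_set A else A.

Definition shift_fam F := shift_elt F @: F.

Lemma shift_setK A : j \in A -> i \notin A -> j |: (shift_set A :\ i) = A.
Proof.
move=> jA iA; apply/setP=> x; rewrite !(in_setU1, in_setD1).
case: (eqVneq x j) => [->|xj] //=; case: (eqVneq x i) => [->|xi] //=.
by rewrite (negbTE iA).
Qed.

Lemma card_shift_set A : j \in A -> i \notin A -> #|shift_set A| = #|A|.
Proof.
move=> jA iA; rewrite cardsU1 in_setD1 (negbTE iA) andbF /=.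
by rewrite [in RHS](cardsD1 j) jA.
Qed.

Lemma shift_elt_inj F : {in F &, injective (shift_elt F)}.
Proof.
move=> A B AF BF; rewrite /shift_elt.
have [/and3P[jA iA sA]|_] := boolP [&& j \in A, i \notin A & shift_set A \notin F];
have [/and3P[jB iB sB]|_] := boolP [&& j \in B, i \notin B & shift_set B \notin F].
- by move=> eqAB; rewrite -(shift_setK jA iA) -(shift_setK jB iB) eqAB.
- by move=> eqAB; rewrite eqAB BF in sA.
- by move=> eqAB; rewrite -eqAB AF in sB.
- by [].
Qed.

Lemma card_shift_fam F : #|shift_fam F| = #|F|.
Proof. exact/card_in_imset/shift_elt_inj. Qed.

Lemma shift_fam_eq0 F : (shift_fam F == set0) = (F == set0).
Proof. by rewrite -!cards_eq0 card_shift_fam. Qed.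

Lemma shift_fam_ksub m k F : F \subset ksub m k -> shift_fam F \subset ksub m k.
Proof.
move=> /subsetP Fk; apply/subsetP=> _ /imsetP[A /Fk AF ->]; rewrite /shift_elt.
case: ifP => // /and3P[jA iA _]; move: AF; rewrite !inE card_shift_set //.
case/andP=> /subsetP Am ->; rewrite andbT; apply/subsetP=> x.
rewrite in_setU1 in_setD1 => /predU1P[->|/andP[_ /Am //]].
by move: (Am j jA); rewrite !inE; apply: ltn_trans.
Qed.

Lemma cross_shift_set F H A B : cross_intersecting F H -> A \in F -> B \in H ->
  j \in A -> i \notin A -> ~~ [disjoint shift_set A & shift_elt H B].
Proof.
move=> cFH AF BH jA iA; have iS : i \in shift_set A by rewrite setU11.
rewrite /shift_elt; case: ifP => [_|nB].
  by apply/meetP; exists i; rewrite // /shift_set setU11.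
have [iB|iB] := boolP (i \in B); first by apply/meetP; exists i.
have [jB|jB] := boolP (j \in B); last first.
  case/meetP: (cFH A B AF BH) => x xA xB; apply/meetP; exists x => //.
  by rewrite in_setU1 in_setD1 xA andbT (contraNneq _ jB) ?orbT // => <-.
have sBH : shift_set B \in H by move: nB; rewrite jB iB => /negbFE.
case/meetP: (cFH A _ AF sBH) => x xA; have xi : x != i by apply: contraNneq iA => <-.
rewrite in_setU1 (negbTE xi) in_setD1 => /andP[xj xB]; apply/meetP; exists x => //.
by rewrite in_setU1 in_setD1 xj xA orbT.
Qed.

Lemma cross_shift_fam F H : cross_intersecting F H ->
  cross_intersecting (shift_fam F) (shift_fam H).
Proof.
move=> cFH _ _ /imsetP[A AF ->] /imsetP[B BH ->].
rewrite {1}/shift_elt; case: ifP => [/and3P[jA iA _]|nA].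
  exact: cross_shift_set cFH AF BH jA iA.
rewrite disjoint_sym /shift_elt; case: ifP => [/and3P[jB iB _]|nB].
  by have := cross_shift_set (cross_intersectingC cFH) BH AF jB iB; rewrite /shift_elt nA.
by rewrite disjoint_sym cFH.
Qed.

Lemma wt_shift_set A : j \in A -> i \notin A -> wt (shift_set A) + j = wt A + i.
Proof.
move=> jA iA; rewrite /wt big_setU1 /=; last by rewrite in_setD1 (negbTE iA) andbF.
by rewrite [in RHS](big_setD1 j jA) /= [RHS]addnC -addnA [j + _]addnC.
Qed.

Lemma wt_shift_elt F A : wt (shift_elt F A) <= wt A.
Proof.
rewrite /shift_elt; case: ifP => // /and3P[jA iA _].
by have := wt_shift_set jA iA; lia.
Qed.

Lemma fam_wt_shift_fam F : fam_wt (shift_fam F) = \sum_(A in F) wt (shift_elt F A).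
Proof. exact/big_imset/shift_elt_inj. Qed.

Lemma fam_wt_shift_fam_le F : fam_wt (shift_fam F) <= fam_wt F.
Proof. by rewrite fam_wt_shift_fam; apply/leq_sum => A _; apply: wt_shift_elt. Qed.

Lemma fam_wt_shift_fam_lt F A : A \in F -> j \in A -> i \notin A ->
  shift_set A \notin F -> fam_wt (shift_fam F) < fam_wt F.
Proof.
move=> AF jA iA sA; rewrite fam_wt_shift_fam /fam_wt !(bigD1 A AF) /=.
rewrite -addSn leq_add //; last by apply: leq_sum => B _; apply: wt_shift_elt.
by rewrite /shift_elt jA iA sA /=; have := wt_shift_set jA iA; lia.
Qed.

End Shift.

Lemma not_shifted_fam_wt F : ~~ shifted F ->
  exists i j, i < j /\ fam_wt (shift_fam i j F) < fam_wt F.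
Proof.
case/forallPn=> A /forallPn[i /forallPn[j]]; rewrite negb_imply.
case/andP=> /and4P[AF jA iA ij] sA; exists i, j; split=> //.
exact: fam_wt_shift_fam_lt AF jA iA sA.
Qed.

Lemma isegS_setD1 t : iseg t.+1 :\ t = iseg t.
Proof. by apply/setP=> x; rewrite !inE ltnS ltn_neqAle. Qed.

Section Link.
Variable t : T.

Definition fdel F := [set A in F | t \notin A].
Definition flink F := [set A :\ t | A in F & t \in A].

Lemma card_fdel_flink F : #|F| = #|fdel F| + #|flink F|.
Proof.
rewrite card_in_imset => [|A B]; last first.
  by rewrite !inE => /andP[_ tA] /andP[_ tB] eqAB; rewrite -(setD1K tA) eqAB setD1K.
rewrite -(cardsID [set A : {set T} | t \in A] F) addnC.
by congr (_ + _); apply: eq_card => A; rewrite !inE andbC.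
Qed.

Lemma fdel_ksub k F : F \subset ksub t.+1 k -> fdel F \subset ksub t k.
Proof.
move=> /subsetP Fk; apply/subsetP=> A; rewrite inE => /andP[/Fk].
by rewrite !inE -isegS_setD1 subsetD1 => /andP[-> ->] ->.
Qed.

Lemma flink_ksub k F : F \subset ksub t.+1 k.+1 -> flink F \subset ksub t k.
Proof.
move=> /subsetP Fk; apply/subsetP=> A' /imsetP[A].
rewrite inE => /andP[/Fk + tA ->]; rewrite !inE -isegS_setD1 => /andP[At].
by rewrite setSD //= (cardsD1 t) tA add1n eqSS.
Qed.

Lemma shifted_fdel k F : F \subset ksub t.+1 k -> shifted F -> shifted (fdel F).
Proof.
move=> /subsetP Fk /shiftedP shF; apply/shiftedP=> A i j.
rewrite inE => /andP[AF tA] jA iA ij; rewrite inE shF //= in_setU1 in_setD1.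
rewrite (negbTE tA) andbF orbF; apply: contraTneq ij => <-.
by rewrite -leqNgt -ltnS (ksub_lt (Fk A AF) jA).
Qed.

Lemma shifted_flink k F : F \subset ksub t.+1 k -> shifted F -> shifted (flink F).
Proof.
move=> /subsetP Fk /shiftedP shF; apply/shiftedP=> A' i j /imsetP[A].
rewrite inE => /andP[AF tA] -> /setD1P[jt jA] iAt ij.
have it : i != t.
  by apply: contraTneq ij => ->; rewrite -leqNgt -ltnS (ksub_lt (Fk A AF) jA).
have iA : i \notin A by rewrite in_setD1 it in iAt.
apply/imsetP; exists (i |: (A :\ j)).
  by rewrite inE shF //= in_setU1 in_setD1 [t == j]eq_sym jt tA orbT.
apply/setP=> x; rewrite !(in_setU1, in_setD1).
by case: (eqVneq x i) => [->|]; rewrite ?it //= andbCA.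
Qed.

Lemma fdel_neq0 k F : k < t -> F \subset ksub t.+1 k -> shifted F ->
  F != set0 -> fdel F != set0.
Proof.
move=> kt /subsetP Fk /shiftedP shF /set0Pn[A AF]; apply/set0Pn.
have [tA|tA] := boolP (t \in A); last by exists A; rewrite inE AF.
have At : #|A| < t by rewrite (card_ksub_mem (Fk A AF)).
have [i it iA] := exists_notin_iseg (ltnW (ltn_ord t)) At.
exists (i |: (A :\ t)); rewrite inE shF //= in_setU1 in_setD1 eqxx orbF.
by apply: contraTneq it => ->; rewrite ltnn.
Qed.

Lemma cross_fdel F H : cross_intersecting F H ->
  cross_intersecting (fdel F) (fdel H).
Proof. by move=> cFH A B; rewrite !inE => /andP[AF _] /andP[BH _]; apply: cFH. Qed.

Lemma cross_flink_fdel F H : cross_intersecting F H ->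
  cross_intersecting (flink F) (fdel H).
Proof.
move=> cFH A' B /imsetP[A]; rewrite !inE => /andP[AF tA] -> /andP[BH tB].
case/meetP: (cFH A B AF BH) => x xA xB; apply/meetP; exists x => //.
by rewrite in_setD1 xA andbT; apply: contraNneq tB => <-.
Qed.

Lemma cross_flink k F H : k.*2 < t ->
  F \subset ksub t.+1 k.+1 -> H \subset ksub t.+1 k.+1 -> shifted H ->
  cross_intersecting F H -> cross_intersecting (flink F) (flink H).
Proof.
move=> kt sF sH /shiftedP shH cFH A' B' A'F B'H; apply/negP=> dA'B'.
(* Moving t in B to a point i outside A' :|: B' would give a member of H
   disjoint from A. *)
have cardA' := card_ksub_mem (subsetP (flink_ksub sF) A' A'F).
have cardB' := card_ksub_mem (subsetP (flink_ksub sH) B' B'H).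
have A'B't : #|A' :|: B'| < t by rewrite cardsU cardA' cardB'; lia.
have [i it] := exists_notin_iseg (ltnW (ltn_ord t)) A'B't.
rewrite in_setU negb_or => /andP[iA' iB'].
case/imsetP: A'F => A; rewrite inE => /andP[AF tA] eA'.
case/imsetP: B'H => B; rewrite inE => /andP[BH tB] eB'.
have ti : t != i by apply: contraTneq it => <-; rewrite ltnn.
have iB : i \notin B by rewrite eB' in_setD1 eq_sym ti in iB'.
case/meetP: (cFH A _ AF (shH B i t BH tB iB it)) => x xA.
rewrite in_setU1 in_setD1 => /predU1P[xi|/andP[xt xB]].
  by subst x; rewrite eA' in_setD1 xA andbT eq_sym ti in iA'.
have xA' : x \in A' by rewrite eA' in_setD1 xt xA.
by have := disjointFr dA'B' xA'; rewrite eB' in_setD1 xt xB.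
Qed.

Lemma card_flink_cross k F H : k.+1 < t ->
  F \subset ksub t.+1 k.+1 -> H \subset ksub t.+1 k.+1 -> shifted H ->
  cross_intersecting F H -> H != set0 -> #|flink F| <= 'C(t, k) - 'C(t - k.+1, k).
Proof.
move=> kt sF sH shH cFH H0; have /set0Pn[B BH] := fdel_neq0 kt sH shH H0.
have Bt : B \in ksub t k.+1 := subsetP (fdel_ksub sH) B BH.
have Bsub : B \subset iseg t by move: Bt; rewrite inE => /andP[].
rewrite -(card_ksub_mem Bt) -(card_ksub_meet k (ltnW (ltn_ord t)) Bsub).
apply: subset_leq_card; apply/subsetP=> A AF.
rewrite inE (subsetP (flink_ksub sF)) //=.
exact: cross_flink_fdel cFH A B AF BH.
Qed.

Section Step.
Hypothesis IH : forall k F H, k.*2 <= t ->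
  F \subset ksub t k -> H \subset ksub t k -> shifted F -> shifted H ->
  cross_intersecting F H -> F != set0 -> H != set0 ->
  #|F| + #|H| <= 'C(t, k) - 'C(t - k, k) + 1.

Lemma card_flinks k F H : k.+1.*2 <= t ->
  F \subset ksub t.+1 k.+1 -> H \subset ksub t.+1 k.+1 -> shifted F -> shifted H ->
  cross_intersecting F H -> flink F != set0 -> flink H != set0 ->
  #|flink F| + #|flink H| <= 'C(t, k) - 'C(t - k.+1, k).
Proof.
move=> kt sF sH shF shH cFH lF lH.
have cl : cross_intersecting (flink F) (flink H).
  by apply: cross_flink sF sH shH cFH; lia.
case: k => [|k] in kt sF sH lF lH cl *.
  by rewrite (cross_ksub0 (flink_ksub sF) cl lF) eqxx in lH.
have kt' : k.+1.*2 <= t by lia.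
have := IH kt' (flink_ksub sF) (flink_ksub sH) (shifted_flink sF shF)
  (shifted_flink sH shH) cl lF lH.
have pascal : 'C(t - k.+1, k.+1) = 'C(t - k.+2, k.+1) + 'C(t - k.+2, k).
  by rewrite -binS subnSK //; lia.
have pos : 0 < 'C(t - k.+2, k) by rewrite bin_gt0; lia.
have le : 'C(t - k.+1, k.+1) <= 'C(t, k.+1) by exact/leq_bin2l/leq_subr.
rewrite pascal in le *; move=> h; apply: (leq_trans h); lia.
Qed.

Lemma shifted_bound_step k F H : k.+1.*2 <= t ->
  F \subset ksub t.+1 k.+1 -> H \subset ksub t.+1 k.+1 -> shifted F -> shifted H ->
  cross_intersecting F H -> F != set0 -> H != set0 ->
  #|F| + #|H| <= 'C(t.+1, k.+1) - 'C(t - k, k.+1) + 1.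
Proof.
move=> kt sF sH shF shH cFH F0 H0; have k_lt_t : k.+1 < t by lia.
have := IH kt (fdel_ksub sF) (fdel_ksub sH) (shifted_fdel sF shF)
  (shifted_fdel sH shH) (cross_fdel cFH) (fdel_neq0 k_lt_t sF shF F0)
  (fdel_neq0 k_lt_t sH shH H0).
have lF := card_flink_cross k_lt_t sF sH shH cFH H0.
have lH := card_flink_cross k_lt_t sH sF shF (cross_intersectingC cFH) F0.
have pascal : 'C(t - k, k.+1) = 'C(t - k.+1, k.+1) + 'C(t - k.+1, k).
  by rewrite -binS subnSK // ltnW.
have le1 : 'C(t - k.+1, k.+1) <= 'C(t, k.+1) by exact/leq_bin2l/leq_subr.
have le2 : 'C(t - k.+1, k) <= 'C(t, k) by exact/leq_bin2l/leq_subr.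
rewrite (card_fdel_flink F) (card_fdel_flink H) binS pascal.
have [lF0|lFn] := eqVneq (flink F) set0; first by rewrite lF0 cards0; lia.
have [lH0|lHn] := eqVneq (flink H) set0; first by rewrite lH0 cards0; lia.
by have := card_flinks kt sF sH shF shH cFH lFn lHn; lia.
Qed.

End Step.

End Link.

Lemma shifted_cross_bound m k F H : k.*2 <= m -> m <= N ->
  F \subset ksub m k -> H \subset ksub m k -> shifted F -> shifted H ->
  cross_intersecting F H -> F != set0 -> H != set0 ->
  #|F| + #|H| <= 'C(m, k) - 'C(m - k, k) + 1.
Proof.
elim: m k F H => [|m IH] [|k] F H // km mN sF sH shF shH cFH F0 H0;
  try by rewrite (cross_ksub0 sF cFH F0) eqxx in H0.
have [km_eq|km_lt] := eqVneq k.+1.*2 m.+1.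
  rewrite -km_eq in mN sF sH *; have := cross_bound_half mN sF sH cFH.
  by rewrite -addnn addnK binn; lia.
rewrite subSS; apply: (@shifted_bound_step (Ordinal mN)) => //=.
  by move=> k' F' H' km'; apply: IH => //; apply: ltnW.
by rewrite -ltnS ltn_neqAle km_lt.
Qed.

Theorem cross_intersecting_bound k F H : k.*2 <= N ->
  F \subset ksub N k -> H \subset ksub N k -> cross_intersecting F H ->
  F != set0 -> H != set0 -> #|F| + #|H| <= 'C(N, k) - 'C(N - k, k) + 1.
Proof.
move=> kN; have [w] := ubnP (fam_wt F + fam_wt H).
elim: w F H => // w IH F H wFH sF sH cFH F0 H0.
have [shF|/not_shifted_fam_wt[i [j [ij ltF]]]] := boolP (shifted F); last first.
  rewrite -(card_shift_fam i j F) -(card_shift_fam i j H).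
  apply: IH; rewrite ?shift_fam_eq0 ?(shift_fam_ksub ij) //; last exact: cross_shift_fam.
  by have := fam_wt_shift_fam_le ij H; lia.
have [shH|/not_shifted_fam_wt[i [j [ij ltH]]]] := boolP (shifted H); last first.
  rewrite addnC -(card_shift_fam i j F) -(card_shift_fam i j H).
  apply: IH; rewrite ?shift_fam_eq0 ?(shift_fam_ksub ij) //.
    by have := fam_wt_shift_fam_le ij F; lia.
  exact/cross_shift_fam/cross_intersectingC.
exact: shifted_cross_bound.
Qed.

End CrossIntersecting.

Lemma sum_bits_lt m (b : nat -> bool) : \sum_(0 <= i < m) b i * 2 ^ i < 2 ^ m.
Proof.
elim: m => [|m IH]; first by rewrite big_geq.
by rewrite big_nat_recr //= expnS; case: (b m); lia.
Qed.

Lemma sum_bits_inj m (b c : nat -> bool) :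
  \sum_(0 <= i < m) b i * 2 ^ i = \sum_(0 <= i < m) c i * 2 ^ i ->
  forall i, i < m -> b i = c i.
Proof.
elim: m => [|m IH] // eq_bc i; rewrite !big_nat_recr //= in eq_bc.
have ltb := sum_bits_lt m b; have ltc := sum_bits_lt m c.
have eq_m : b m = c m by move: eq_bc; case: (b m) (c m) => [] [] /=; lia.
move: eq_bc; rewrite eq_m => /addIn eq_bc.
by rewrite ltnS leq_eqVlt => /predU1P[->|/IH]; last exact.
Qed.

Section BinaryWeight.
Variable n : nat.
Implicit Types A B : {set 'I_n}.

Definition bin_wt A := \sum_(i in A) 2 ^ i.

Lemma bin_wt_inj : injective bin_wt.
Proof.
pose bit A i := if insub i is Some x then x \in A else false.
have bin_wtE A : bin_wt A = \sum_(0 <= i < n) bit A i * 2 ^ i.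
  rewrite /bin_wt big_mkcond big_mkord /=; apply: eq_bigr => i _.
  by rewrite /bit valK; case: (i \in A); rewrite ?mul1n.
move=> A B; rewrite !bin_wtE => /sum_bits_inj eq_bit; apply/setP=> x.
by have := eq_bit x (ltn_ord x); rewrite /bit valK.
Qed.

Lemma bin_wtU A B : [disjoint A & B] -> bin_wt (A :|: B) = bin_wt A + bin_wt B.
Proof. by move=> dAB; rewrite /bin_wt -bigU //; apply: eq_bigl => i; rewrite !inE. Qed.

End BinaryWeight.

Arguments bin_wt {n}.

Local Open Scope ring_scope.

Section LeadingSupport.
Variables (F : fieldType) (n : nat).
Local Notation V := (ext F n).
Implicit Types (A B C a b : {set 'I_n}) (x y : V) (K L : {vspace V}).

Definition leading x A :=
  (x A != 0) && [forall B, (x B != 0) ==> (bin_wt B <= bin_wt A)%N].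

Lemma leading_exists x : x != 0 -> exists A, leading x A.
Proof.
move=> x0; have [A0 xA0] : exists A0, x A0 != 0.
  apply/existsP; apply: contraNT x0 => /existsPn x0; apply/eqP/ffunP=> A.
  by have := x0 A; rewrite ffunE negbK => /eqP.
have [A xA Amax] := @arg_maxnP _ A0 (fun A => x A != 0) bin_wt xA0.
by exists A; rewrite /leading xA; apply/forallP=> B; apply/implyP/Amax.
Qed.

Lemma leading_unique_split x y a b A B : leading x a -> leading y b ->
  [disjoint a & b] -> [disjoint A & B] -> A :|: B = a :|: b ->
  x A != 0 -> y B != 0 -> A = a /\ B = b.
Proof.
move=> /andP[_ /forallP xa] /andP[_ /forallP yb] dab dAB eqU xA yB.
have := implyP (xa A) xA; have := implyP (yb B) yB.
have := congr1 bin_wt eqU; rewrite !bin_wtU // => eq_wt.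
by split; apply: bin_wt_inj; lia.
Qed.

Lemma leading_wedge x y a b : leading x a -> leading y b -> [disjoint a & b] ->
  wedge x y (a :|: b) != 0.
Proof.
move=> xa yb dab; rewrite ffunE (bigD1 a) //= (bigD1 b) //= dab eqxx /=.
rewrite !big1 ?addr0 => [|A Aa|B Bb].
- rewrite !mulf_neq0 ?expf_neq0 ?oppr_eq0 ?oner_eq0 //.
    by case/andP: xa.
  by case/andP: yb.
- apply: big1 => B _; case: ifP => // /andP[dAB /eqP eqU].
  have [->|xA] := eqVneq (x A) 0; first by rewrite mulr0 mul0r.
  have [->|yB] := eqVneq (y B) 0; first by rewrite mulr0.
  have [eqA _] := leading_unique_split xa yb dab dAB eqU xA yB.
  by rewrite eqA eqxx in Aa.
- case: ifP => // /andP[dAB /eqP eqU].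
  have [->|yB] := eqVneq (y B) 0; first by rewrite mulr0.
  have [->|xa0] := eqVneq (x a) 0; first by rewrite mulr0 mul0r.
  have [_ eqB] := leading_unique_split xa yb dab dAB eqU xa0 yB.
  by rewrite eqB eqxx in Bb.
Qed.

Lemma ext_deg_supp k x A : x \in ext_deg F n k -> x A != 0 -> #|A| = k.
Proof.
rewrite /ext_deg; set s := [seq _ | _ <- _] => /coord_span -> xA.
apply/eqP; apply: contraNT xA => Ak; apply/eqP.
rewrite sum_ffunE big1 // => i _; rewrite ffunE.
have /mapP[B] : s`_i \in s by rewrite mem_nth ?size_tuple.
rewrite mem_enum inE => /eqP Bk ->; rewrite ffunE.
by case: eqP => [eqAB|_]; [rewrite eqAB Bk eqxx in Ak | rewrite scaler0].
Qed.

Definition lead_supports K := [set A | `[< exists2 x, x \in K & leading x A >]].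

Lemma lead_supportsP K A :
  reflect (exists2 x, x \in K & leading x A) (A \in lead_supports K).
Proof. by rewrite inE; apply: asboolP. Qed.

Definition restrict (S : {set {set 'I_n}}) x : V :=
  [ffun C => if C \in S then x C else 0].

Lemma restrict_is_linear S : linear (restrict S).
Proof.
move=> c x y; apply/ffunP=> C; rewrite !ffunE.
by case: ifP => _; rewrite ?ffunE ?scaler0 ?addr0.
Qed.

HB.instance Definition _ S :=
  GRing.isLinear.Build F V V *:%R (restrict S) (restrict_is_linear S).

Lemma restrictE S x : restrict S x = \sum_(C in S) x C *: ext_basis F C.
Proof.
apply/ffunP=> D; rewrite sum_ffunE ffunE.
have [DS|DS] := boolP (D \in S); last first.
  rewrite big1 // => C CS; rewrite !ffunE.
  by case: eqP => [eqDC|_]; [rewrite eqDC CS in DS | rewrite scaler0].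
rewrite (bigD1 D) //= big1 => [|C /andP[_ CD]]; rewrite !ffunE.
  by rewrite eqxx addr0 -[RHS]/(x D * 1) mulr1.
by rewrite eq_sym (negbTE CD) scaler0.
Qed.

Lemma dim_le_lead_supports K : (\dim K <= #|lead_supports K|)%N.
Proof.
(* The leading coefficient of a nonzero vector of K survives restriction to
   S, so the restriction is injective on K. *)
set S := lead_supports K; pose f := linfun (restrict S).
have inj_f : (K :&: lker f = 0)%VS.
  apply/eqP; rewrite -subv0; apply/subvP=> x; rewrite memv_cap memv_ker lfunE /=.
  case/andP=> xK /eqP fx0; rewrite memv0; apply: contraT => x0.
  have [A xA] := leading_exists x0.
  have AS : A \in S by apply/lead_supportsP; exists x.
  have := congr1 (fun z : V => z A) fx0; rewrite !ffunE AS => /eqP.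
  by case/andP: xA => /negbTE ->.
rewrite -(limg_dim_eq inj_f).
have fK : (f @: K <= <<[seq ext_basis F C | C <- enum S]>>)%VS.
  apply/subvP=> _ /memv_imgP[x _ ->]; rewrite lfunE /= restrictE.
  apply: rpred_sum => C CS; apply/rpredZ/memv_span.
  by apply: map_f; rewrite mem_enum.
by rewrite (leq_trans (dimvS fK)) // (leq_trans (dim_span _)) // size_map cardE.
Qed.

Lemma lead_supports_ksub k K : (K <= ext_deg F n k)%VS ->
  lead_supports K \subset ksub n n k.
Proof.
move=> /subvP sK; apply/subsetP=> A /lead_supportsP[x xK /andP[xA _]].
by rewrite inE iseg_N subsetT (ext_deg_supp (sK x xK) xA) eqxx.
Qed.

Lemma lead_supports_neq0 K : K != 0%VS -> lead_supports K != set0.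
Proof.
move=> K0; have [A xA] : exists A, leading (vpick K) A.
  by apply: leading_exists; rewrite vpick0.
by apply/set0Pn; exists A; apply/lead_supportsP; exists (vpick K); rewrite ?memv_pick.
Qed.

Lemma cross_lead_supports K L :
  (forall x y, x \in K -> y \in L -> wedge x y = 0) ->
  cross_intersecting (lead_supports K) (lead_supports L).
Proof.
move=> KL0 A B /lead_supportsP[x xK xA] /lead_supportsP[y yL yB].
by apply/negP=> dAB; have := leading_wedge xA yB dAB; rewrite KL0 // ffunE eqxx.
Qed.

End LeadingSupport.

Theorem theorem1p7 (F : fieldType) (n k : nat) (K L : {vspace ext F n}) :
  (2 \notin [pchar F])%N ->
  (k.*2 <= n)%N ->
  (K <= ext_deg F n k)%VS -> (L <= ext_deg F n k)%VS ->
  K != 0%VS -> L != 0%VS ->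
  (forall x y, x \in K -> y \in L -> wedge x y = 0) ->
  (\dim K + \dim L <= 'C(n, k) - 'C(n - k, k) + 1)%N.
Proof.
move=> _ kn sK sL K0 L0 KL0.
apply: leq_trans (leq_add (dim_le_lead_supports K) (dim_le_lead_supports L)) _.
exact: cross_intersecting_bound kn (lead_supports_ksub sK) (lead_supports_ksub sL)
  (cross_lead_supports KL0) (lead_supports_neq0 K0) (lead_supports_neq0 L0).
Qed.
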